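(* Let $h>0$. Apart from equilibrium points, the flow $(\dagger)$ restricted to the infinity manifold $N_h$ has no closed orbits and no recurrent orbits.
   Context: Let $\Theta(s)=1-s^2$, and let $\lambda\in(0,\pi/4)$ be a constant depending only on the masses. The infinity manifold is $N_h=\{(\tilde v,\tilde s,\tilde u)\in\mathbb R\times[-1,1]\times\mathbb R:\tfrac12(\tilde u^2+\tilde v^2)=h\}$. It is the invariant subset $\{\tilde R=0\}$ of the positive-energy regularized flow $(\dagger)$ of the collinear three-body problem with Hamiltonian $$\tfrac12\mathbf p^TM^{-1}\mathbf p-\sum_{i<j}\alpha_{ij}|q_i-q_j|^{-a}+\sum_{i<j}\beta_{ij}|q_i-q_j|^{-b},$$ where $m_i,\alpha_{ij},\beta_{ij}>0$ and $4<a<b-1$. On $N_h$ the flow is $$\tilde v'=\Theta(\tilde s)\tilde u^2,\qquad \tilde s'=\tfrac1\lambda\Theta(\tilde s)\tilde u,\qquad \tilde u'=-\Theta(\tilde s)\tilde u\tilde v.$$ *)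

From Stdlib Require Import Reals.
Open Scope R_scope.

Definition Theta (s : R) : R := 1 - s ^ 2.

(* The vector field of the flow (dagger) on the infinity manifold {R~ = 0},
   in coordinates (v, s, u). *)
Definition fld_v (lam v s u : R) : R := Theta s * u ^ 2.
Definition fld_s (lam v s u : R) : R := / lam * Theta s * u.
Definition fld_u (lam v s u : R) : R := - (Theta s * u * v).

Definition in_N (h v s u : R) : Prop :=
  -1 <= s <= 1 /\ / 2 * (u ^ 2 + v ^ 2) = h.

Definition is_orbit_N (lam h : R) (v s u : R -> R) : Prop :=
  forall t : R,
    in_N h (v t) (s t) (u t) /\
    derivable_pt_lim v t (fld_v lam (v t) (s t) (u t)) /\
    derivable_pt_lim s t (fld_s lam (v t) (s t) (u t)) /\
    derivable_pt_lim u t (fld_u lam (v t) (s t) (u t)).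

Definition is_equilibrium (lam v s u : R) : Prop :=
  fld_v lam v s u = 0 /\ fld_s lam v s u = 0 /\ fld_u lam v s u = 0.

Definition is_closed_orbit (v s u : R -> R) : Prop :=
  exists T : R, 0 < T /\ forall t : R, v (t + T) = v t /\ s (t + T) = s t /\ u (t + T) = u t.

Definition near0 (v s u : R -> R) (t eps : R) : Prop :=
  Rabs (v t - v 0) < eps /\ Rabs (s t - s 0) < eps /\ Rabs (u t - u 0) < eps.

(* Recurrent orbit: the initial point lies in its own omega-limit set
   (positively recurrent) or its own alpha-limit set (negatively recurrent). *)
Definition is_recurrent_orbit (v s u : R -> R) : Prop :=
  (forall eps T : R, 0 < eps -> exists t, T < t /\ near0 v s u t eps) \/
  (forall eps T : R, 0 < eps -> exists t, t < T /\ near0 v s u t eps).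

From Stdlib Require Import Reals Lra.
Open Scope R_scope.

(* On the infinity manifold the coordinate v is a Lyapunov-type
   function: v' = Theta(s) u^2 >= 0 because |s| <= 1, so v is nondecreasing
   along every orbit.  If the initial point is not an equilibrium then
   Theta(s 0) u 0 <> 0, hence v'(0) > 0 and v(-d) < v 0 < v d for some d > 0.
   By monotonicity the orbit then stays at v-distance >= v d - v 0 from its
   initial point for all t >= d, and >= v 0 - v(-d) for all t <= -d, so the
   initial point is neither positively nor negatively recurrent. *)

Lemma strict_increase_at (f : R -> R) (x l : R) :
  derivable_pt_lim f x l -> 0 < l ->
  exists d, 0 < d /\ f (x - d) < f x /\ f x < f (x + d).
Proof.
  intros Hf Hl.
  destruct (Hf (l / 2) ltac:(lra)) as [[del Hdel] Hquot]; simpl in Hquot.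
  exists (del / 2); split; [lra |].
  assert (Hright := Hquot (del / 2) ltac:(lra) ltac:(rewrite Rabs_right; lra)).
  assert (Hleft := Hquot (- (del / 2)) ltac:(lra) ltac:(rewrite Rabs_left; lra)).
  apply Rabs_def2 in Hright as [_ Hright].
  apply Rabs_def2 in Hleft as [_ Hleft].
  replace (x - del / 2) with (x + - (del / 2)) by ring.
  split.
  - assert (Hdiff : f x - f (x + - (del / 2))
                    = (f (x + - (del / 2)) - f x) / - (del / 2) * (del / 2))
      by (field; lra).
    assert (0 < (f (x + - (del / 2)) - f x) / - (del / 2) * (del / 2))
      by (apply Rmult_lt_0_compat; lra).
    lra.
  - assert (Hdiff : f (x + del / 2) - f x
                    = (f (x + del / 2) - f x) / (del / 2) * (del / 2))
      by (field; lra).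
    assert (0 < (f (x + del / 2) - f x) / (del / 2) * (del / 2))
      by (apply Rmult_lt_0_compat; lra).
    lra.
Qed.

Lemma periodic_at_multiples (f : R -> R) (T : R) :
  (forall t, f (t + T) = f t) -> forall n : nat, f (INR n * T) = f 0.
Proof.
  intros Hper n; induction n as [| n IH].
  - simpl; rewrite Rmult_0_l; reflexivity.
  - rewrite S_INR, Rmult_plus_distr_r, Rmult_1_l, Hper; exact IH.
Qed.

(* A closed orbit is positively recurrent: at the times n T it is back at
   its initial point, and these times are unbounded. *)
Lemma closed_orbit_recurrent (v s u : R -> R) :
  is_closed_orbit v s u -> is_recurrent_orbit v s u.
Proof.
  intros [T [HT Hper]]; left; intros eps T0 Heps.
  destruct (INR_archimed T T0 HT) as [n Hn].
  exists (INR n * T); split; [lra |].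
  unfold near0.
  rewrite (periodic_at_multiples v T (fun t => proj1 (Hper t))),
          (periodic_at_multiples s T (fun t => proj1 (proj2 (Hper t)))),
          (periodic_at_multiples u T (fun t => proj2 (proj2 (Hper t)))).
  rewrite !Rminus_diag, Rabs_R0; repeat split; exact Heps.
Qed.

(* Along an orbit in N_h the coordinate v is nondecreasing, since
   v' = Theta(s) u^2 and Theta(s) >= 0 for |s| <= 1. *)
Lemma orbit_v_nondecreasing (lam h : R) (v s u : R -> R) :
  is_orbit_N lam h v s u -> increasing v.
Proof.
  intros Horb.
  assert (pr : derivable v).
  { intro t; destruct (Horb t) as [_ [Hv _]]; exact (exist _ _ Hv). }
  apply (nonneg_derivative_1 v pr); intro t.
  destruct (Horb t) as [[[Hs1 Hs2] _] [Hv _]].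
  rewrite (derive_pt_eq_0 _ _ _ _ Hv); unfold fld_v, Theta.
  assert (s t ^ 2 <= 1) by nra.
  apply Rmult_le_pos; [lra | apply pow2_ge_0].
Qed.

Lemma fld_v_pos (lam h v s u : R) :
  in_N h v s u -> Theta s * u <> 0 -> 0 < fld_v lam v s u.
Proof.
  intros [[Hs1 Hs2] _] Hne; unfold fld_v, Theta in *.
  assert (Htheta : 1 - s ^ 2 <> 0) by (intro E; apply Hne; rewrite E; ring).
  assert (Hu : u <> 0) by (intro E; apply Hne; rewrite E; ring).
  assert (0 < u ^ 2) by (simpl; rewrite Rmult_1_r; apply Rsqr_pos_lt, Hu).
  apply Rmult_lt_0_compat; [simpl in *; nra | assumption].
Qed.

(* The whole vector field is a multiple of Theta(s) u, so it vanishes with it. *)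
Lemma equilibrium_of_vanishing (lam v s u : R) :
  Theta s * u = 0 -> is_equilibrium lam v s u.
Proof.
  intros Z; unfold is_equilibrium, fld_v, fld_s, fld_u.
  replace (Theta s * u ^ 2) with (Theta s * u * u) by ring.
  replace (/ lam * Theta s * u) with (/ lam * (Theta s * u)) by ring.
  rewrite Z; repeat split; ring.
Qed.

Lemma strictly_increasing_not_recurrent (v s u : R -> R) (d : R) :
  increasing v -> 0 < d -> v (0 - d) < v 0 -> v 0 < v (0 + d) ->
  ~ is_recurrent_orbit v s u.
Proof.
  rewrite Rminus_0_l, Rplus_0_l.
  intros Hinc Hd Hpast Hfuture [Hrec | Hrec].
  - destruct (Hrec (v d - v 0) d ltac:(lra)) as [t [Ht [Hnear _]]].
    assert (v d <= v t) by (apply Hinc; lra).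
    rewrite Rabs_right in Hnear; lra.
  - destruct (Hrec (v 0 - v (- d)) (- d) ltac:(lra)) as [t [Ht [Hnear _]]].
    assert (v t <= v (- d)) by (apply Hinc; lra).
    rewrite Rabs_left in Hnear; lra.
Qed.

Theorem mainTheorem7 :
  forall (lam h : R), 0 < lam < PI / 4 -> 0 < h ->
  forall v s u : R -> R, is_orbit_N lam h v s u ->
    (is_closed_orbit v s u \/ is_recurrent_orbit v s u) ->
    is_equilibrium lam (v 0) (s 0) (u 0).
Proof.
  intros lam h _ _ v s u Horb Hreturn.
  assert (Hrec : is_recurrent_orbit v s u)
    by (destruct Hreturn as [Hclosed | Hrec];
        [exact (closed_orbit_recurrent v s u Hclosed) | exact Hrec]).
  destruct (Req_dec (Theta (s 0) * u 0) 0) as [Hzero | Hne].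
  - exact (equilibrium_of_vanishing lam _ _ _ Hzero).
  - exfalso.
    destruct (Horb 0) as [HN [Hv0 _]].
    destruct (strict_increase_at v 0 _ Hv0 (fld_v_pos lam h _ _ _ HN Hne))
      as [d [Hd [Hpast Hfuture]]].
    exact (strictly_increasing_not_recurrent v s u d
             (orbit_v_nondecreasing lam h v s u Horb) Hd Hpast Hfuture Hrec).
Qed.
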